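(* Let $d\ge1$, $D=\{1,\dots,d\}$, let $\Pi$ and $Q$ be $d\times d$ stochastic matrices indexed by $D$, and define $\mathcal{E}^{(O)}_H:\mathcal{M}_d\otimes\mathcal{M}_d\to\mathcal{M}_d$ by linear extension of $\mathcal{E}^{(O)}_H(a\otimes b)=\mathcal{E}_H(\mathcal{E}_{H,O}(a\otimes\mathbf{1}_d)\otimes b)$. Then $\mathcal{E}^{(O)}_H$ is completely positive and identity preserving, and for all $a,b\in\mathcal{M}_d$ $$\mathcal{E}^{(O)}_H(a\otimes b)=a\diamond P_{H,O}(\mathbf{1}_d)\diamond P_H(b)=\sum_{i,j,k,m,l\in D}a_{ij}b_{ml}\sqrt{Q_{ik}Q_{jk}}\sqrt{\Pi_{im}\Pi_{jl}}\,e_{ij},$$ where $a=(a_{ij})$, $b=(b_{ij})$.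
   Context: $\mathcal{M}_d$ is the algebra of complex $d\times d$ matrices with identity $\mathbf{1}_d$ and matrix units $e_{ij}$; $\diamond$ is the Schur (entrywise) product. A stochastic matrix has nonnegative entries and row sums $1$. $P_H(A)=\sum_{i,j,k,l\in D}\sqrt{\Pi_{ik}\Pi_{jl}}\,a_{kl}e_{ij}$, $P_{H,O}(B)=\sum_{i,j,k,l\in D}\sqrt{Q_{ik}Q_{jl}}\,b_{kl}e_{ij}$, and $\mathcal{E}_H,\mathcal{E}_{H,O}$ are the linear extensions of $\mathcal{E}_H(a\otimes b)=a\diamond P_H(b)$, $\mathcal{E}_{H,O}(a\otimes b)=a\diamond P_{H,O}(b)$. *)

From HB Require Import structures.
From mathcomp Require Import all_boot all_order all_algebra all_field.
From mathcomp.real_closed Require Import mxtens.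
Set Implicit Arguments. Unset Strict Implicit. Unset Printing Implicit Defensive.
Import Order.TTheory GRing.Theory Num.Theory.
Local Open Scope ring_scope.

(* M_d = 'M[algC]_d ;  M_d (x) M_d is identified with 'M[algC]_(d*d) via the
   Kronecker product  a (x) b = a *t b  (mathcomp real_closed/mxtens). *)

Definition schur (d : nat) (a b : 'M[algC]_d) : 'M[algC]_d :=
  \matrix_(i, j) (a i j * b i j).

Definition stochastic (d : nat) (P : 'M[algC]_d) : Prop :=
  (forall i j, 0 <= P i j) /\ (forall i, \sum_j P i j = 1).

(* P_H(A) = sum_{i,j,k,l} sqrt(Pi_ik Pi_jl) a_kl e_ij  (same shape for P_{H,O} with Q) *)
Definition PH (d : nat) (Pi A : 'M[algC]_d) : 'M[algC]_d :=
  \matrix_(i, j) \sum_k \sum_l sqrtC (Pi i k * Pi j l) * A k l.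

Definition lin_ext (d : nat) (f : 'M[algC]_d -> 'M[algC]_d -> 'M[algC]_d)
  (X : 'M[algC]_(d * d)) : 'M[algC]_d :=
  \sum_i \sum_j \sum_k \sum_l
     X (mxtens_index (i, k)) (mxtens_index (j, l)) *: f (delta_mx i j) (delta_mx k l).

Definition EH (d : nat) (Pi : 'M[algC]_d) : 'M[algC]_(d * d) -> 'M[algC]_d :=
  lin_ext (fun a b => schur a (PH Pi b)).

Definition EHO (d : nat) (Q : 'M[algC]_d) : 'M[algC]_(d * d) -> 'M[algC]_d :=
  lin_ext (fun a b => schur a (PH Q b)).

Definition EHOt (d : nat) (Pi Q : 'M[algC]_d) : 'M[algC]_(d * d) -> 'M[algC]_d :=
  lin_ext (fun a b => EH Pi (EHO Q (a *t (1%:M : 'M[algC]_d)) *t b)).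

Definition positive_mx (n : nat) (x : 'M[algC]_n) : Prop :=
  exists y : 'M[algC]_n, x = (map_mx Num.conj y)^T *m y.

(* amplification id_n (x) Phi : M_n (x) M_m -> M_n (x) M_p *)
Definition ampl (n m p : nat) (Phi : 'M[algC]_m -> 'M[algC]_p)
  (X : 'M[algC]_(n * m)) : 'M[algC]_(n * p) :=
  \sum_r \sum_s (delta_mx r s : 'M[algC]_n) *t
      Phi (\matrix_(u, v) X (mxtens_index (r, u)) (mxtens_index (s, v))).

Definition completely_positive (m p : nat) (Phi : 'M[algC]_m -> 'M[algC]_p) : Prop :=
  forall (n : nat) (X : 'M[algC]_(n * m)), positive_mx X -> positive_mx (ampl Phi X).

From HB Require Import structures.
From mathcomp Require Import all_boot all_order all_algebra all_field.
From mathcomp.real_closed Require Import mxtens.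
From mathcomp Require Import ring.
Import Order.TTheory GRing.Theory Num.Theory.
Set Implicit Arguments. Unset Strict Implicit. Unset Printing Implicit Defensive.
Local Open Scope ring_scope.
Local Open Scope sesquilinear_scope.

(* E_H^(O), like E_H and E_{H,O}, acts on M_d (x) M_d by
   X |-> (sum_{k,l} X_{(i,k),(j,l)} G_{ijkl})_{ij}; evaluating on matrix units
   gives the kernel G_{ijkl} = P_{H,O}(1)_{ij} sqrt(Pi_ik Pi_jl).  On a (x) b
   this yields both closed forms, and the unit is preserved because the
   diagonals of P_{H,O}(1) and P_H(1) are the row sums of Q and Pi.
   The kernel factors as G_{ijkl} = sum_q conj(v_{qik}) v_{qjl} with
   v_{qik} = sqrt(Q_iq) sqrt(Pi_ik), so the amplified map sends a Gram matrix
   Y^* Y to the Gram matrix W^* W of a rectangular W, and by the spectral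
   theorem such a matrix is also y^* y for a square y. *)

Local Notation idx := mxtens_index.
Local Notation unidx := mxtens_unindex.

Lemma sum_delta_mxE m n (F : 'I_m -> 'I_n -> algC) i j :
  \sum_i' \sum_j' F i' j' * delta_mx i' j' i j = F i j.
Proof.
have /matrixP/(_ i j) := matrix_sum_delta (\matrix_(i, j) F i j).
rewrite mxE summxE => ->; apply: eq_bigr => i' _; rewrite summxE.
by apply: eq_bigr => j' _; rewrite !mxE.
Qed.

Lemma sum_mxtens_index m n (F : 'I_(m * n) -> algC) :
  \sum_g F g = \sum_a \sum_b F (idx (a, b)).
Proof.
rewrite pair_big; apply: (reindex (fun ab : 'I_m * 'I_n => idx (ab.1, ab.2))).
by exists (@unidx m n) => [[a b]|g] _; rewrite ?mxtens_indexK ?mxtens_unindexK.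
Qed.

Lemma trmxC_mul m n p (A : 'M[algC]_(m, n)) (B : 'M_(n, p)) :
  (A *m B) ^t* = B ^t* *m A ^t*.
Proof. by rewrite trmx_mul map_mxM. Qed.

Lemma conjC_sqrtC_ge0 (x : algC) : 0 <= x -> (sqrtC x)^* = sqrtC x.
Proof. by move=> x_ge0; rewrite conj_Creal // ger0_real // sqrtC_ge0. Qed.

Lemma gram_positive_mx m n (Z : 'M[algC]_(m, n)) : positive_mx (Z ^t* *m Z).
Proof.
set H := Z ^t* *m Z.
have H_normal : H \is normalmx by apply/normalmxP; rewrite trmxC_mul trmxCK.
have /orthomx_spectralP := H_normal.
set P := spectralmx H; set x := spectral_diag H.
have P_unitary : P \is unitarymx := spectral_unitarymx H.
rewrite invmx_unitary // => HE.
have x_ge0 j : 0 <= x 0 j.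
  have -> : x 0 j = ((Z *m P ^t*) ^t* *m (Z *m P ^t*)) j j.
    rewrite trmxC_mul trmxCK -mulmxA (mulmxA (Z ^t*)) -/H HE !mulmxA.
    rewrite (unitarymxP P_unitary) mul1mx -mulmxA (unitarymxP P_unitary).
    by rewrite mulmx1 mxE eqxx mulr1n.
  by rewrite mxE sumr_ge0 // => k _; rewrite !mxE mulrC mul_conjC_ge0.
exists (diag_mx (\row_j sqrtC (x 0 j)) *m P).
rewrite map_trmx trmxC_mul tr_diag_mx map_diag_mx HE -!mulmxA; congr (_ *m _).
rewrite mulmxA mulmx_diag; congr (diag_mx _ *m _); apply/rowP => j.
by rewrite !mxE /= conjC_sqrtC_ge0 // -expr2 sqrtCK.
Qed.

Lemma amplE n m p (Phi : 'M[algC]_m -> 'M[algC]_p) (X : 'M_(n * m)) r s i j :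
  ampl Phi X (idx (r, i)) (idx (s, j)) =
  Phi (\matrix_(u, v) X (idx (r, u)) (idx (s, v))) i j.
Proof.
rewrite summxE -[RHS](sum_delta_mxE
  (fun r' s' => Phi (\matrix_(u, v) X (idx (r', u)) (idx (s', v))) i j) r s).
apply: eq_bigr => r' _; rewrite summxE; apply: eq_bigr => s' _.
by rewrite tensmxE mulrC.
Qed.

Lemma completely_positive_ext m p (Phi Psi : 'M[algC]_m -> 'M[algC]_p) :
  Phi =1 Psi -> completely_positive Psi -> completely_positive Phi.
Proof.
move=> eq_Phi Psi_cp n X /Psi_cp; congr positive_mx; apply: eq_bigr => r _.
by apply: eq_bigr => s _; rewrite eq_Phi.
Qed.

Section KernelMap.

Variables m e : nat.
Variable G : 'I_m -> 'I_m -> 'I_e -> 'I_e -> algC.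

Definition kernel_map (X : 'M[algC]_(m * e)) : 'M[algC]_m :=
  \matrix_(i, j) \sum_k \sum_l X (idx (i, k)) (idx (j, l)) * G i j k l.

Lemma kernel_map_tens (a : 'M_m) (b : 'M_e) i j :
  kernel_map (a *t b) i j = a i j * \sum_k \sum_l b k l * G i j k l.
Proof.
rewrite mxE mulr_sumr; apply: eq_bigr => k _; rewrite mulr_sumr.
by apply: eq_bigr => l _; rewrite tensmxE mulrA.
Qed.

Lemma kernel_map_cp p (v : 'I_p -> 'I_m -> 'I_e -> algC) :
  (forall i j k l, G i j k l = \sum_q (v q i k)^* * v q j l) ->
  completely_positive kernel_map.
Proof.
move=> GE n X [Y ->]; rewrite map_trmx.
pose W : 'M_(n * (m * e) * p, n * m) := \matrix_(gq, ri)
  \sum_k Y (unidx gq).1 (idx ((unidx ri).1, idx ((unidx ri).2, k))) *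
         v (unidx gq).2 (unidx ri).2 k.
suff -> : ampl kernel_map (Y ^t* *m Y) = W ^t* *m W by apply: gram_positive_mx.
apply/matrixP => a b; case: (mxtens_indexP a) => r i; case: (mxtens_indexP b) => s j.
rewrite amplE mxE [RHS]mxE sum_mxtens_index.
pose T g q k l := (Y g (idx (r, idx (i, k))))^* * (v q i k)^* *
                  (Y g (idx (s, idx (j, l))) * v q j l).
transitivity (\sum_k \sum_l \sum_g \sum_q T g q k l).
  apply: eq_bigr => k _; apply: eq_bigr => l _.
  rewrite !mxE GE mulr_suml; apply: eq_bigr => g _; rewrite mulr_sumr.
  by apply: eq_bigr => q _; rewrite !mxE /= /T; ring.
transitivity (\sum_g \sum_q \sum_k \sum_l T g q k l); last first.
  apply: eq_bigr => g _; apply: eq_bigr => q _.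
  rewrite !mxE !mxtens_indexK /= rmorph_sum mulr_suml; apply: eq_bigr => k _.
  by rewrite mulr_sumr; apply: eq_bigr => l _; rewrite rmorphM.
under eq_bigr => k _ do rewrite exchange_big.
under eq_bigr => k _ do under eq_bigr => g _ do rewrite exchange_big.
by rewrite exchange_big; apply: eq_bigr => g _; rewrite exchange_big.
Qed.

End KernelMap.

Lemma lin_ext_kernel d (f : 'M[algC]_d -> 'M_d -> 'M_d)
    (G : 'I_d -> 'I_d -> 'I_d -> 'I_d -> algC) :
  (forall i' j' k l i j,
     f (delta_mx i' j') (delta_mx k l) i j = delta_mx i' j' i j * G i j k l) ->
  lin_ext f =1 kernel_map G.
Proof.
move=> fE X; apply/matrixP => i j; rewrite mxE.
rewrite -(sum_delta_mxE (fun i' j' =>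
  \sum_k \sum_l X (idx (i', k)) (idx (j', l)) * G i j k l)) summxE.
apply: eq_bigr => i' _; rewrite summxE; apply: eq_bigr => j' _.
rewrite summxE mulr_suml; apply: eq_bigr => k _; rewrite summxE mulr_suml.
by apply: eq_bigr => l _; rewrite mxE fE mulrCA mulrC.
Qed.

Lemma PH_delta d (P : 'M[algC]_d) k l i j :
  PH P (delta_mx k l) i j = sqrtC (P i k * P j l).
Proof.
rewrite mxE -[RHS](sum_delta_mxE (fun k' l' => sqrtC (P i k' * P j l')) k l).
apply: eq_bigr => k' _; apply: eq_bigr => l' _.
by rewrite !mxE [k' == k]eq_sym [l' == l]eq_sym.
Qed.

Lemma PH1E d (P : 'M[algC]_d) i j : PH P 1%:M i j = \sum_k sqrtC (P i k * P j k).
Proof.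
rewrite mxE; apply: eq_bigr => k _.
rewrite (bigD1 k) //= big1 => [|l ne_lk]; last first.
  by rewrite !mxE eq_sym (negbTE ne_lk) mulr0.
by rewrite !mxE eqxx mulr1 addr0.
Qed.

Lemma PH1_diag d (P : 'M[algC]_d) i : stochastic P -> PH P 1%:M i i = 1.
Proof.
case=> P_ge0 P_rows; rewrite PH1E -(P_rows i).
by apply: eq_bigr => k _; rewrite -expr2 sqrCK.
Qed.

Lemma EH_tens d (P a b : 'M[algC]_d) : EH P (a *t b) = schur a (PH P b).
Proof.
apply/matrixP => i j.
rewrite /EH (@lin_ext_kernel _ _ (fun i j k l => sqrtC (P i k * P j l))); last first.
  by move=> i' j' k l i0 j0; rewrite mxE PH_delta.
rewrite kernel_map_tens [RHS]mxE [PH P b i j]mxE; congr (_ * _).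
by apply: eq_bigr => k _; apply: eq_bigr => l _; rewrite mulrC.
Qed.

Lemma EHOt_kernel d (Pi Q : 'M[algC]_d) :
  EHOt Pi Q =1 kernel_map (fun i j k l => PH Q 1%:M i j * sqrtC (Pi i k * Pi j l)).
Proof.
apply: lin_ext_kernel => i' j' k l i j.
rewrite EH_tens [EHO Q _](EH_tens Q) mxE [schur _ _ i j]mxE PH_delta.
by rewrite mulrA.
Qed.

Lemma EHOt_tens d (Pi Q a b : 'M[algC]_d) :
  EHOt Pi Q (a *t b) = schur (schur a (PH Q 1%:M)) (PH Pi b).
Proof.
apply/matrixP => i j.
rewrite EHOt_kernel kernel_map_tens [RHS]mxE [schur a _ i j]mxE [PH Pi b i j]mxE.
rewrite -mulrA; congr (_ * _); rewrite mulr_sumr; apply: eq_bigr => k _.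
by rewrite mulr_sumr; apply: eq_bigr => l _; rewrite mulrCA (mulrC (b k l)).
Qed.

Lemma EHOt_tens_sum d (Pi Q a b : 'M[algC]_d) :
  EHOt Pi Q (a *t b) =
  \sum_i \sum_j \sum_k \sum_m \sum_l
    (a i j * b m l * sqrtC (Q i k * Q j k) * sqrtC (Pi i m * Pi j l)) *: delta_mx i j.
Proof.
rewrite [LHS]matrix_sum_delta; apply: eq_bigr => i _; apply: eq_bigr => j _.
rewrite EHOt_tens [schur _ _ i j]mxE [schur a _ i j]mxE PH1E [PH Pi b i j]mxE.
rewrite -mulrA mulr_suml mulr_sumr scaler_suml; apply: eq_bigr => k _.
rewrite mulr_sumr mulr_sumr scaler_suml; apply: eq_bigr => m _.
rewrite mulr_sumr mulr_sumr scaler_suml; apply: eq_bigr => l _.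
by congr (_ *: _); ring.
Qed.

Lemma EHOt_unital d (Pi Q : 'M[algC]_d) :
  stochastic Pi -> stochastic Q -> EHOt Pi Q (1%:M *t 1%:M) = 1%:M.
Proof.
move=> Pi_st Q_st; apply/matrixP => i j.
rewrite EHOt_tens [LHS]mxE [schur _ _ i j]mxE.
have [<-|ne_ij] := eqVneq i j; last by rewrite !mxE (negbTE ne_ij) !mul0r.
by rewrite !PH1_diag // mxE eqxx !mulr1.
Qed.

Lemma EHOt_cp d (Pi Q : 'M[algC]_d) :
  stochastic Pi -> stochastic Q -> completely_positive (EHOt Pi Q).
Proof.
case=> Pi_ge0 _ [Q_ge0 _]; apply: completely_positive_ext (EHOt_kernel Pi Q) _.
apply: (@kernel_map_cp _ _ _ _ (fun q i k => sqrtC (Q i q) * sqrtC (Pi i k))).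
move=> i j k l; rewrite PH1E mulr_suml; apply: eq_bigr => q _.
by rewrite rmorphM /= !conjC_sqrtC_ge0 // !sqrtCM ?nnegrE //; ring.
Qed.

Theorem mainTheorem6 (d : nat) (Pi Q : 'M[algC]_d) :
  (0 < d)%N -> stochastic Pi -> stochastic Q ->
  [/\ completely_positive (EHOt Pi Q),
      EHOt Pi Q ((1%:M : 'M[algC]_d) *t (1%:M : 'M[algC]_d)) = 1%:M,
      (forall a b : 'M[algC]_d,
          EHOt Pi Q (a *t b) = schur (schur a (PH Q 1%:M)) (PH Pi b)) &
      (forall a b : 'M[algC]_d,
          EHOt Pi Q (a *t b) =
          \sum_i \sum_j \sum_k \sum_m \sum_l
            (a i j * b m l * sqrtC (Q i k * Q j k) * sqrtC (Pi i m * Pi j l))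
              *: delta_mx i j)].
Proof.
move=> _ Pi_st Q_st; split.
- exact: EHOt_cp.
- exact: EHOt_unital.
- exact: EHOt_tens.
- exact: EHOt_tens_sum.
Qed.
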